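(* Let $\Gamma=(V,E)$ be a connected graph of valency at least $3$, $G\leqslant\mathrm{Aut}(\Gamma)$, and assume $\Gamma$ is $(G,2)$-arc-transitive. Let $G^*=\langle G_{\alpha_1},G_{\alpha_2}\rangle$ for some $\{\alpha_1,\alpha_2\}\in E$ and $M=\mathrm{soc}(G^* )$, and assume $G^*$ is a quasiprimitive group of PA type on each of its orbits on $V$, so that $M=T_1\times\cdots\times T_n$ is the unique minimal normal subgroup of $G^*$, with $n\geqslant2$ and the $T_i$ pairwise isomorphic nonabelian simple groups, and for each $\alpha\in V$ there are subgroups $R_i<T_i$ with $M_\alpha\leqslant R_1\times\cdots\times R_n$ such that every projection $\pi_i:M_\alpha\to R_i$ is surjective. Assume $\Gamma$ is $M$-locally primitive. Then every $\pi_i$ is injective; in particular, $M_\alpha\cong R_i$ for all $i$.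
   Context: Graphs are finite, simple and undirected; $G_\alpha$ is a vertex stabilizer and $\Gamma(\alpha)$ the neighbourhood of $\alpha$. A $2$-arc is a triple $(\alpha,\beta,\gamma)$ of distinct vertices with $\{\alpha,\beta\},\{\beta,\gamma\}\in E$, and $(G,2)$-arc-transitive means $G$ is transitive on $2$-arcs. A permutation group is quasiprimitive if each minimal normal subgroup is transitive. $\mathrm{soc}(X)$ is the subgroup generated by all minimal normal subgroups of $X$. $\Gamma$ is $M$-locally primitive if $M_\gamma$ acts primitively on $\Gamma(\gamma)$ for every vertex $\gamma$. *)

From mathcomp Require Import all_boot all_fingroup all_solvable.
Set Implicit Arguments. Unset Strict Implicit. Unset Printing Implicit Defensive.
Local Open Scope group_scope.

Section Defs.
Variable V : finType.

Definition simple_graph (adj : rel V) :=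
  symmetric adj /\ irreflexive adj.

Definition neighbourhood (adj : rel V) (a : V) : {set V} := [set b | adj a b].

Definition connected_graph (adj : rel V) := forall a b : V, connect adj a b.

Definition valency_ge (adj : rel V) (k : nat) := forall a : V, k <= #|neighbourhood adj a|.

Definition automorphisms (adj : rel V) (G : {set {perm V}}) :=
  forall g, g \in G -> forall a b : V, adj (g a) (g b) = adj a b.

Definition two_arc (adj : rel V) (t : V * V * V) :=
  [/\ adj t.1.1 t.1.2, adj t.1.2 t.2, t.1.1 != t.1.2, t.1.2 != t.2 & t.1.1 != t.2].

Definition two_arc_transitive (adj : rel V) (G : {set {perm V}}) :=
  forall s t, two_arc adj s -> two_arc adj t ->
    exists2 g, g \in G &
      [/\ g s.1.1 = t.1.1, g s.1.2 = t.1.2 & g s.2 = t.2].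

Definition locally_primitive (adj : rel V) (M : {set {perm V}}) :=
  forall c : V, [primitive 'C_M[c | 'P], on neighbourhood adj c | 'P].
End Defs.

Section GroupDefs.
Variable gT : finGroupType.

Definition minimal_normal (N X : {set gT}) := minnormal N X && (N \subset X).

Definition socle_grp (X : {set gT}) : {set gT} :=
  <<\bigcup_(N : {group gT} | minimal_normal N X) N>>.

End GroupDefs.

Definition quasiprimitive_on_orbits (V : finType) (X : {set {perm V}}) :=
  forall (N : {group {perm V}}), minimal_normal N X ->
    forall a : V, [transitive N, on orbit 'P X a | 'P].

(* i-th coordinate projection for a direct decomposition M = T_0 x ... x T_(n-1) *)
Definition proj_coord (gT : finGroupType) (n : nat) (T : 'I_n -> {group gT})
    (i : 'I_n) (x : gT) : gT :=
  divgr (T i) (\prod_(j < n | j != i) T j) x.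

From mathcomp Require Import all_boot all_fingroup all_solvable.
Set Implicit Arguments. Unset Strict Implicit. Unset Printing Implicit Defensive.
Local Open Scope group_scope.

(* The kernel of the i-th projection on M_a is K_a = M_a ∩ C_M(T_i), a normal
   subgroup of M_a, so by local primitivity it either fixes Γ(a) pointwise or is
   transitive on it.  An arc reversal normalises G* = <G_a1, G_a2>, hence M, and
   G* has at most the two orbits of a1 and a2; so G ∩ N(M) is vertex-transitive,
   and G* permutes the T_i transitively.  Hence the same alternative holds at
   every vertex and for every i.  In the first case K_x <= K_y along edges, so by
   connectivity K_a fixes every vertex.  In the second case M_x = K_x M_xy gives
   π_i(M_x) <= π_i(M_y) for neighbours, so R = π_i(M_x) does not depend on x; the
   vertex stabilisers generate a nontrivial normal subgroup of G*, which must be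
   M, whence T_i = π_i(M) <= R < T_i, a contradiction. *)

Lemma atransJ (aT : finGroupType) (rT : finType) (to : {action aT &-> rT})
    (A : {group aT}) (S : {set rT}) g :
  [transitive A, on S | to] -> [transitive A :^ g, on to^* S g | to].
Proof.
case/imsetP=> x Sx ->; apply/imsetP; exists (to x g); last by rewrite setact_orbit.
by rewrite setact_orbit orbit_refl.
Qed.

Lemma minnormalJ (gT : finGroupType) (A B : {group gT}) g :
  g \in 'N(B) -> minnormal A B -> minnormal (A :^ g)%G B.
Proof.
move=> nBg /mingroupP[/andP[ntA nAB] minA]; apply/mingroupP; split.
  by rewrite /= conjsg_eq1 ntA /= normJ -{1}(normP nBg) conjSg.
move=> H /andP[ntH nHB] sHAg.
have nBgV : B :^ g^-1 = B by rewrite (normP (groupVr nBg)).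
suff defHgV : (H :^ g^-1)%G :=: A by rewrite /= -defHgV conjsgKV.
apply: minA; last by rewrite /= sub_conjgV.
by rewrite /= conjsg_eq1 ntH /= normJ -nBgV conjSg.
Qed.

Section SimpleNormal.
Variable gT : finGroupType.
Implicit Types A B M T : {group gT}.

Lemma simple_normal_eq_or_cent M A B :
  A <| M -> B <| M -> simple A -> simple B -> A :=: B \/ A \subset 'C(B).
Proof.
move=> nsAM nsBM simA simB.
have nAB : B \subset 'N(A) by rewrite (subset_trans (normal_sub nsBM)) ?normal_norm.
have nBA : A \subset 'N(B) by rewrite (subset_trans (normal_sub nsAM)) ?normal_norm.
have nsAB_B : (A :&: B)%G <| B by rewrite /normal subsetIr normsI ?normG.
case/simpleP: simB => ntB /(_ _ nsAB_B) [] /= defAB.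
  by right; apply/commG1P/trivgP; rewrite -defAB commg_subI ?subsetI ?subxx ?nAB.
have sBA : B \subset A by rewrite -defAB subsetIl.
have nsBA : B <| A by rewrite /normal sBA nBA.
case/simpleP: simA => _ /(_ _ nsBA) [] defB; last by left.
by rewrite defB eqxx in ntB.
Qed.

Lemma center_simple_nonabelian T : simple T -> ~~ abelian T -> 'Z(T) = 1.
Proof.
case/simpleP=> _ /(_ _ (center_normal T)) [] // defZ.
by rewrite /abelian -{1}defZ subsetIr.
Qed.

End SimpleNormal.

Section BigDirectProduct.
Variables (gT : finGroupType) (M : {group gT}) (n : nat) (T : 'I_n -> {group gT}).
Hypothesis defM : \big[dprod/1]_(i < n) T i = M.
Hypotheses (simT : forall i, simple (T i)) (nabT : forall i, ~~ abelian (T i)).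

Definition cofactor i := \prod_(j < n | j != i) T j.

Lemma cofactor_group_dprod i :
  exists2 L : {group gT}, cofactor i = L & T i \x L = M.
Proof.
move: defM; rewrite (bigD1 i) //= => defTL.
have [[_ L _ defL] _ _ _] := dprodP defTL.
by exists L; [apply: bigdprodW defL | rewrite -defL].
Qed.

Lemma group_set_cofactor i : group_set (cofactor i).
Proof. by have [L -> _] := cofactor_group_dprod i; apply: groupP. Qed.

Canonical cofactor_group i := Group (group_set_cofactor i).

Lemma cofactor_dprod i : T i \x cofactor i = M.
Proof. by have [L -> ] := cofactor_group_dprod i. Qed.

Lemma factor_normal i : T i <| M.
Proof. by have [] := dprod_normal2 (cofactor_dprod i). Qed.

Lemma cofactor_cent i : cofactor i = 'C_M(T i).
Proof.
have [_ _ cTL _] := dprodP (cofactor_dprod i).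
have nTL : T i \subset 'N(T i) :&: 'N(cofactor i).
  by rewrite subsetI normG cents_norm // centsC.
have := subcent_dprod (cofactor_dprod i) nTL.
rewrite -/('Z(T i)) center_simple_nonabelian //.
by rewrite (setIidPl cTL) dprod1g.
Qed.

Lemma proj_coordM i : {in M &, {morph proj_coord T i : x y / x * y}}.
Proof.
have [_ defTL cTL tiTL] := dprodP (cofactor_dprod i).
by apply: (@divgrM _ _ (cofactor_group i)) => //; apply/complP.
Qed.

Canonical proj_coord_morphism i := Morphism (proj_coordM i).

Lemma proj_coord_id i t : t \in T i -> proj_coord T i t = t.
Proof. exact: (@divgr_id _ _ (cofactor_group i)). Qed.

Lemma ker_proj_coord i : 'ker (proj_coord_morphism i) = 'C_M(T i).
Proof.
have [_ defTL _ tiTL] := dprodP (cofactor_dprod i).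
rewrite -cofactor_cent; apply/setP=> x; rewrite !inE /=.
apply/andP/idP => [[Mx /eqP proj_x1] | Lx].
  have := divgr_eq (T i) (cofactor i) x; rewrite -/(proj_coord T i x) proj_x1 mul1g.
  by move=> ->; rewrite mem_remgr ?defTL.
have Mx : x \in M by rewrite -defTL -[x]mul1g mem_mulg.
by rewrite Mx -[x]mul1g [proj_coord _ _ _](@divgrMid _ _ (cofactor_group i)).
Qed.

Lemma normal_simple_factor (A : {group gT}) :
  A <| M -> simple A -> ~~ abelian A -> exists k, A :=: T k.
Proof.
move=> nsAM simA nabA.
have [k /eqP defA | noT] := pickP (fun k => A == T k :> {set gT}).
  by exists k.
case/negP: nabA; apply: subset_trans (normal_sub nsAM) _.
rewrite -(bigdprodWY defM) gen_subG; apply/bigcupsP=> k _; rewrite centsC.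
have [defA | //] := simple_normal_eq_or_cent nsAM (factor_normal k) simA (simT k).
by have := noT k; rewrite /= defA eqxx.
Qed.

Lemma factorJ i h : h \in 'N(M) -> exists k, T i :^ h = T k.
Proof.
move=> nMh; have nsTh : T i :^ h <| M by rewrite -(normP nMh) normalJ factor_normal.
have simTh : simple (T i :^ h) by rewrite -(isog_simple (conj_isog _ h)).
have [|k defTh] := normal_simple_factor nsTh simTh; last by exists k.
by rewrite abelianJ.
Qed.

Lemma minnormal_factor_transitive (X : {group gT}) i j :
  minnormal M X -> exists2 h, h \in X & T i :^ h = T j.
Proof.
case/mingroupP=> /andP[_ nMX] minM.
have [h /andP[Xh /eqP defTh] | noh] := pickP (fun h => (h \in X) && (T i :^ h == T j)).
  by exists h.
pose N := <<class_support (T i) X>>%G.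
have nNX : X \subset 'N(N) by rewrite norms_gen ?class_support_norm.
have ntN : N :!=: 1.
  apply: contraNneq (proj1 (simpleP _ (simT i))) => N1; apply/eqP/trivgP.
  by rewrite -N1 sub_gen ?sub_class_support.
have defN : N :=: M.
  apply: minM; first by rewrite ntN nNX.
  by rewrite gen_subG class_support_sub_norm // normal_sub ?factor_normal.
case/negP: (nabT j); apply: subset_trans (normal_sub (factor_normal j)) _.
rewrite -defN gen_subG class_supportEr; apply/bigcupsP=> h Xh.
have [k defTh] := factorJ i (subsetP nMX h Xh).
rewrite defTh; have [defTk | //] :=
  simple_normal_eq_or_cent (factor_normal k) (factor_normal j) (simT k) (simT j).
by have := noh h; rewrite Xh defTh /= defTk eqxx.
Qed.

End BigDirectProduct.

Section ArcTransitiveGraph.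
Variables (V : finType) (adj : rel V) (G : {group {perm V}}).
Hypotheses (simple_adj : simple_graph adj) (conn_adj : connected_graph adj)
  (val2 : valency_ge adj 2) (autG : automorphisms adj G)
  (arcs2 : two_arc_transitive adj G).

Lemma adj_sym b c : adj b c -> adj c b.
Proof. by case: simple_adj => symA _; rewrite symA. Qed.

Lemma adj_neq b c : adj b c -> b != c.
Proof. by case: simple_adj => _ irrA; apply: contraTneq => ->; rewrite irrA. Qed.

Lemma exists_other_neighbour b c : exists2 w, adj b w & w != c.
Proof.
have : 0 < #|neighbourhood adj b :\ c|.
  by have := val2 b; rewrite (cardsD1 c); case: (c \in _) => // /ltnW.
rewrite card_gt0 => /set0Pn [w]; rewrite !inE => /andP [wc bw].
by exists w.
Qed.

Lemma two_arc_through b c : adj b c -> exists w, two_arc adj (c, b, w).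
Proof.
move=> bc; have [w bw wc] := exists_other_neighbour b c.
exists w; split => //=; first exact: adj_sym.
- by rewrite eq_sym adj_neq.
- exact: adj_neq.
- by rewrite eq_sym.
Qed.

Lemma stab_transitive_neighbourhood b c y : adj b c -> adj b y ->
  exists2 k, k \in G & k b = b /\ k c = y.
Proof.
move=> bc b_y; have [w arc_c] := two_arc_through bc; have [w' arc_y] := two_arc_through b_y.
by have [k Gk [kc kb _]] := arcs2 arc_c arc_y; exists k.
Qed.

Lemma arc_reversal b c : adj b c -> exists2 g, g \in G & g b = c /\ g c = b.
Proof.
move=> bc; have [w arc_bc] := two_arc_through (adj_sym bc).
have [w' arc_cb] := two_arc_through bc.
by have [g Gg [gb gc _]] := arcs2 arc_bc arc_cb; exists g.
Qed.

Lemma neighbourhoodJ g x : g \in G ->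
  setact 'P (neighbourhood adj x) g = neighbourhood adj (g x).
Proof.
move=> Gg; apply/setP=> y; rewrite setactE inE.
apply/imsetP/idP => [[z] | gx_y]; first by rewrite inE => xz ->; rewrite /= apermE autG.
exists (g^-1 y); last by rewrite /= apermE permKV.
by rewrite inE -(autG Gg x) permKV.
Qed.

Lemma transitive_neighbourhood_nontrivial (A : {group {perm V}}) x :
  [transitive A, on neighbourhood adj x | 'P] -> A :!=: 1.
Proof.
move=> trA; apply: contraTneq (val2 x) => A1.
have [y _ ->] := imsetP trA; rewrite A1 -ltnNge ltnS.
by rewrite orbitE (leq_trans (leq_imset_card _ _)) ?cards1.
Qed.

Lemma connected_const (X : eqType) (f : V -> X) :
  (forall x y, adj x y -> f x = f y) -> forall x y, f x = f y.
Proof.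
move=> f_adj x y.
have cl : closed adj [pred z | f z == f x] by move=> z t /f_adj; rewrite !inE => ->.
by have := closed_connect cl (conn_adj x y); rewrite !inE eqxx => /esym/eqP ->.
Qed.

Lemma orbit_adj_stab (Gs : {group {perm V}}) b c y z :
  Gs \subset G -> 'C_G[b | 'P] \subset Gs -> adj b c ->
  y \in orbit 'P Gs b -> adj y z -> z \in orbit 'P Gs c.
Proof.
move=> sGsG sGbGs bc /orbitP [h Gsh <-] hb_z.
have Gh : h \in G := subsetP sGsG h Gsh.
have bz : adj b (h^-1 z) by rewrite -(autG Gh) permKV.
have [k Gk [kb kc]] := stab_transitive_neighbourhood bc bz.
apply/orbitP; exists (k * h); last by rewrite /= apermE permM kc permKV.
by rewrite groupM // (subsetP sGbGs) // inE Gk; apply/astab1P.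
Qed.

Lemma two_orbits_cover (Gs : {group {perm V}}) a1 a2 x :
  adj a1 a2 -> Gs :=: <<'C_G[a1 | 'P] :|: 'C_G[a2 | 'P]>> ->
  (x \in orbit 'P Gs a1) || (x \in orbit 'P Gs a2).
Proof.
move=> a12 defGs.
have sGsG : Gs \subset G by rewrite defGs gen_subG subUset !subsetIl.
have sG1 : 'C_G[a1 | 'P] \subset Gs by rewrite defGs sub_gen ?subsetUl.
have sG2 : 'C_G[a2 | 'P] \subset Gs by rewrite defGs sub_gen ?subsetUr.
have adj_orbits y z : adj y z ->
    (y \in orbit 'P Gs a1) || (y \in orbit 'P Gs a2) ->
    (z \in orbit 'P Gs a1) || (z \in orbit 'P Gs a2).
  move=> yz /orP[y1 | y2]; apply/orP.
    by right; apply: orbit_adj_stab y1 yz.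
  by left; apply: orbit_adj_stab (adj_sym a12) y2 yz.
have cl : closed adj [pred y | (y \in orbit 'P Gs a1) || (y \in orbit 'P Gs a2)].
  move=> y z yz; rewrite !inE.
  by apply/idP/idP; apply: adj_orbits; rewrite // adj_sym.
rewrite -[_ || _]/(x \in [pred y | _]) -(closed_connect cl (conn_adj a1 x)).
by rewrite inE orbit_refl.
Qed.

End ArcTransitiveGraph.

Section PATypeStabilizers.
Variables (V : finType) (adj : rel V) (G : {group {perm V}}) (a1 a2 : V)
  (Gs M : {group {perm V}}) (n : nat) (T : 'I_n -> {group {perm V}})
  (R : V -> 'I_n -> {group {perm V}}).
Hypotheses (simple_adj : simple_graph adj) (conn_adj : connected_graph adj)
  (val2 : valency_ge adj 2) (autG : automorphisms adj G)
  (arcs2 : two_arc_transitive adj G) (a12 : adj a1 a2)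
  (defGs : Gs :=: <<'C_G[a1 | 'P] :|: 'C_G[a2 | 'P]>>)
  (qpGs : quasiprimitive_on_orbits Gs) (minM : minimal_normal M Gs)
  (uniqM : forall N : {group {perm V}}, minimal_normal N Gs -> N :=: M)
  (defM : \big[dprod/1]_(i < n) T i = M)
  (simT : forall i, simple (T i)) (nabT : forall i, ~~ abelian (T i))
  (properR : forall a i, R a i \proper T i)
  (projR : forall a i, proj_coord T i @: 'C_M[a | 'P] = R a i)
  (lpM : locally_primitive adj M).

Lemma Gs_sub_G : Gs \subset G.
Proof. by rewrite defGs gen_subG subUset !subsetIl. Qed.

Lemma minnormal_M : minnormal M Gs.
Proof. by case/andP: minM. Qed.

Lemma Gs_norm_M : Gs \subset 'N(M).
Proof. by case/mingroupP: minnormal_M => /andP[]. Qed.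

Lemma M_sub_G : M \subset G.
Proof. by case/andP: minM => _ /subset_trans; apply; apply: Gs_sub_G. Qed.

Lemma arc_reversal_norm : exists2 g, g \in G :&: 'N(M) & g a1 = a2 /\ g a2 = a1.
Proof.
have [g Gg [g1 g2]] := arc_reversal simple_adj val2 arcs2 a12.
have stabJ a : 'C_G[a | 'P] :^ g = 'C_G[g a | 'P].
  by rewrite conjIg (conjGid Gg) -(astab1_act 'P).
have nGs_g : g \in 'N(Gs).
  by apply/normP; rewrite defGs -genJ conjUg !stabJ g1 g2 setUC.
exists g => //; rewrite inE Gg; apply/normP/uniqM/andP; split.
  exact: minnormalJ minnormal_M.
by rewrite /= -(normP nGs_g) conjSg; case/andP: minM.
Qed.

Lemma vertex_transitive_norm x : exists2 h, h \in G :&: 'N(M) & h a1 = x.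
Proof.
have sGsGN : Gs \subset G :&: 'N(M) by rewrite subsetI Gs_sub_G Gs_norm_M.
have [g GNg [g1 _]] := arc_reversal_norm.
have := two_orbits_cover simple_adj conn_adj val2 autG arcs2 x a12 defGs.
case/orP => /orbitP[h Gsh <-].
  by exists h; rewrite ?(subsetP sGsGN).
exists (g * h); last by rewrite permM g1.
by rewrite groupM // (subsetP sGsGN).
Qed.

Definition cent_stab_transitive x (A : {set {perm V}}) :=
  [transitive 'C_M[x | 'P] :&: 'C_M(A), on neighbourhood adj x | 'P].

Lemma cent_stab_transitiveJ x A g : g \in G :&: 'N(M) ->
  cent_stab_transitive x A -> cent_stab_transitive (g x) (A :^ g).
Proof.
case/setIP=> Gg nMg /(atransJ g); rewrite (neighbourhoodJ autG) // conjIg.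
have -> : 'C_M[x | 'P] :^ g = 'C_M[g x | 'P].
  by rewrite conjIg (normP nMg) -(astab1_act 'P).
by rewrite conjIg (normP nMg) -centJ.
Qed.

Lemma cent_stab_transitive_factor x i j :
  cent_stab_transitive x (T i) -> cent_stab_transitive x (T j).
Proof.
move=> trx.
have [h0 Gsh0 defTj] := minnormal_factor_transitive defM simT nabT i j minnormal_M.
(* M is transitive on the G*-orbit of x, so h0 can be corrected by some m in M
   into an element fixing x. *)
have [m Mm mx] := atransP2 (qpGs minM x) (orbit_refl _ _ _) (mem_orbit 'P x Gsh0).
have GNh0 : h0 \in G :&: 'N(M).
  by rewrite inE (subsetP Gs_sub_G) ?(subsetP Gs_norm_M).
have GNm : m \in G :&: 'N(M) by rewrite inE (subsetP M_sub_G) ?(subsetP (normG M)).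
have := cent_stab_transitiveJ (groupM GNh0 (groupVr GNm)) trx.
have nTjm : m^-1 \in 'N(T j).
  by rewrite groupV (subsetP (normal_norm (factor_normal defM j))).
by rewrite permM -[h0 x]/('P%act x h0) mx permK conjsgM defTj (normP nTjm).
Qed.

Lemma cent_stab_transitive_all x y i j :
  cent_stab_transitive x (T i) -> cent_stab_transitive y (T j).
Proof.
move=> trx.
have [g GNg gx] := vertex_transitive_norm x.
have [h GNh hy] := vertex_transitive_norm y.
have GNf : g^-1 * h \in G :&: 'N(M) by rewrite groupM ?groupV.
have [k defTk] := factorJ defM simT nabT i (subsetP (subsetIr _ _) _ GNf).
have fx : (g^-1 * h) x = y by rewrite permM -gx permK.
apply: (@cent_stab_transitive_factor _ k); rewrite -defTk -fx.
exact: cent_stab_transitiveJ.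
Qed.

Lemma cent_stab_dichotomy x i :
  'C_M[x | 'P] :&: 'C_M(T i) \subset 'C(neighbourhood adj x | 'P)
  \/ cent_stab_transitive x (T i).
Proof.
have nsK : ('C_M[x | 'P] :&: 'C_M(T i))%G <| 'C_M[x | 'P].
  rewrite /normal subsetIl normsI ?normG // (subset_trans (subsetIl _ _)) //.
  by rewrite normsI ?normG ?norms_cent ?normal_norm ?factor_normal.
have [sK | ] := prim_trans_norm (lpM x) nsK; last by right.
by left; apply: subset_trans sK (subsetIr _ _).
Qed.

Lemma intransitive_cent_stab_trivial i a :
  (forall x, ~~ cent_stab_transitive x (T i)) -> 'C_M[a | 'P] :&: 'C_M(T i) = 1.
Proof.
move=> ntr; pose K x := 'C_M[x | 'P] :&: 'C_M(T i).
have sK x y : adj x y -> K x \subset K y.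
  move=> xy; have [cK | trx] := cent_stab_dichotomy x i; last by have := ntr x; rewrite trx.
  apply/subsetP=> u Ku; have [/setIP[Mu _] cTu] := setIP Ku.
  have uy : u y = y by apply: (astabP (subsetP cK u Ku)); rewrite inE.
  by rewrite inE cTu andbT inE Mu; apply/astab1P.
have eqK : forall x y, K x = K y.
  apply: (connected_const conn_adj (f := K)) => x y xy.
  by apply/eqP; rewrite eqEsubset !sK // adj_sym.
apply/trivgP/subsetP=> u Ku; apply/set1gP/permP=> z; rewrite perm1.
have : u \in K z by rewrite (eqK z a).
by case/setIP=> /setIP[_ /astab1P].
Qed.

Lemma proj_stab_sub_adj i x y :
  cent_stab_transitive x (T i) -> adj x y -> R x i \subset R y i.
Proof.
move=> trx xy; rewrite -!projR; apply/subsetP=> _ /imsetP[m Cm ->].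
have [Mm /astab1P mx] := setIP Cm.
have Nx_y : y \in neighbourhood adj x by rewrite inE.
have Nx_my : m y \in neighbourhood adj x.
  by rewrite inE -{1}mx /= apermE autG ?(subsetP M_sub_G).
have [k Kk ky] := atransP2 trx Nx_y Nx_my.
have [/setIP[Mk _] cTk] := setIP Kk.
have Cmk : m * k^-1 \in 'C_M[y | 'P].
  by rewrite inE groupM ?groupV //=; apply/astab1P; rewrite /= apermE permM ky permK.
have proj_k1 : proj_coord T i k = 1.
  by apply: (mker (f := proj_coord_morphism defM i)); rewrite ker_proj_coord.
have := proj_coordM defM i (groupM Mm (groupVr Mk)) Mk.
by rewrite mulgKV proj_k1 mulg1 => ->; rewrite imset_f.
Qed.

Lemma point_stabilizers_gen x : 'C_M[x | 'P] :!=: 1 -> <<\bigcup_(y : V) 'C_M[y | 'P]>> = M.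
Proof.
move=> ntMx; pose N := <<\bigcup_(y : V) 'C_M[y | 'P]>>%G.
have sNM : N \subset M by rewrite gen_subG; apply/bigcupsP=> y _; apply: subsetIl.
have nNGs : Gs \subset 'N(N).
  apply: subset_trans (norm_gen _); apply/subsetP=> h Gsh.
  have nMh : h \in 'N(M) := subsetP Gs_norm_M h Gsh.
  rewrite inE; apply/subsetP=> u; rewrite mem_conjg => /bigcupP[y _ uy].
  have : u \in 'C_M[y | 'P] :^ h by rewrite mem_conjg.
  rewrite conjIg (normP nMh) -(astab1_act 'P) => uyh.
  by apply/bigcupP; exists ('P%act y h).
have ntN : N :!=: 1.
  apply: contraNneq ntMx => N1; apply/eqP/trivgP; rewrite -N1.
  by rewrite sub_gen // (bigcup_max x).
by case/mingroupP: minnormal_M => _; apply; rewrite ?ntN.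
Qed.

Lemma not_everywhere_cent_stab_transitive i :
  ~ (forall x, cent_stab_transitive x (T i)).
Proof.
move=> tr.
have eqR x : R x i = R a1 i :> {set _}.
  apply: (connected_const conn_adj (f := fun x => R x i : {set _})) => y z yz.
  by apply/eqP; rewrite eqEsubset !proj_stab_sub_adj // adj_sym.
have defM_stabs : <<\bigcup_(x : V) 'C_M[x | 'P]>> = M.
  apply: (point_stabilizers_gen (x := a1)).
  have := transitive_neighbourhood_nontrivial val2 (tr a1).
  by apply: contraNneq => Ma1; apply/eqP/trivgP; rewrite -Ma1 subsetIl.
have sMR : M \subset proj_coord_morphism defM i @*^-1 (R a1 i).
  rewrite -{1}defM_stabs gen_subG; apply/bigcupsP=> x _; apply/subsetP=> u Mx_u.
  have Mu : u \in M by case/setIP: Mx_u.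
  by rewrite mem_morphpre //= -(eqR x) -projR imset_f.
have : T i \subset R a1 i.
  apply/subsetP=> t Tt; have Mt := subsetP (normal_sub (factor_normal defM i)) t Tt.
  by have /morphpreP[_] := subsetP sMR t Mt; rewrite /= (proj_coord_id defM).
by move=> sTR; have := properR a1 i; rewrite properE sTR andbF.
Qed.

Lemma cent_stab_trivial a i : 'C_M[a | 'P] :&: 'C_M(T i) = 1.
Proof.
apply: intransitive_cent_stab_trivial => x; apply/negP => trx.
apply: (@not_everywhere_cent_stab_transitive i) => y.
exact: cent_stab_transitive_all trx.
Qed.

End PATypeStabilizers.

Theorem lemma4p2 (V : finType) (adj : rel V) (G : {group {perm V}})
    (a1 a2 : V) (Gs M : {group {perm V}}) (n : nat)
    (T : 'I_n -> {group {perm V}}) (R : V -> 'I_n -> {group {perm V}}) :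
  simple_graph adj -> connected_graph adj -> valency_ge adj 3 ->
  automorphisms adj G -> two_arc_transitive adj G ->
  adj a1 a2 ->
  Gs :=: <<'C_G[a1 | 'P] :|: 'C_G[a2 | 'P]>> ->
  M :=: socle_grp Gs ->
  (* G* quasiprimitive of PA type on each of its orbits: *)
  quasiprimitive_on_orbits Gs ->
  minimal_normal M Gs ->
  (forall N : {group {perm V}}, minimal_normal N Gs -> N :=: M) ->
  (2 <= n)%N ->
  \big[dprod/1]_(i < n) T i = M ->
  (forall i, simple (T i) /\ ~~ abelian (T i)) ->
  (forall i j, T i \isog T j) ->
  (forall a i, R a i \proper T i) ->
  (forall a, 'C_M[a | 'P] \subset \prod_(i < n) R a i) ->
  (forall a i, proj_coord T i @: 'C_M[a | 'P] = R a i) ->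
  locally_primitive adj M ->
  forall (a : V) (i : 'I_n),
    {in 'C_M[a | 'P] &, injective (proj_coord T i)} /\
    'C_M[a | 'P] \isog R a i.
Proof.
move=> simple_adj conn_adj val3 autG arcs2 a12 defGs _ qpGs minM uniqM _ defM
  simT_nabT _ properR _ projR lpM a i.
have val2 : valency_ge adj 2 by move=> x; apply: ltnW.
have simT j : simple (T j) by case: (simT_nabT j).
have nabT j : ~~ abelian (T j) by case: (simT_nabT j).
have K1 := cent_stab_trivial simple_adj conn_adj val2 autG arcs2 a12 defGs qpGs minM
  uniqM defM simT nabT properR projR lpM a i.
pose f := restrm (subsetIl M 'C[a | 'P]) (proj_coord_morphism defM i).
have injf : 'injm f by rewrite ker_restrm (ker_proj_coord defM simT nabT) K1.
split; first exact: (injmP injf).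
apply/isogP; exists f => //.
by rewrite morphim_restrm setIid morphimEsub ?subsetIl ?projR.
Qed.
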